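(* Let $\mathbf{A}\in\mathbb{C}^{M\times N_a}$, $\mathbf{B}\in\mathbb{C}^{M\times N_b}$ have unit-$\ell_2$-norm columns with coherence parameters $\mu_a,\mu_b,\mu_m$, and $\mathbf{D}=[\mathbf{A}\ \mathbf{B}]$. Let $\mathbf{h}=[\mathbf{h}_x^T\ \mathbf{h}_e^T]^T$ where $\mathbf{h}_x\in\mathbb{C}^{N_a}$ has at most $n_x\ge1$ nonzero entries and $\mathbf{h}_e\in\mathbb{C}^{N_b}$ has at most $n_e\ge1$ nonzero entries. Then $$(1-g)\|\mathbf{h}\|_2^2\le\|\mathbf{D}\mathbf{h}\|_2^2\le(1+g)\|\mathbf{h}\|_2^2,\qquad g=\max\{\mu_a(n_x-1),\mu_b(n_e-1)\}+\sqrt{n_xn_e}\,\mu_m.$$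
   Context: Coherence parameters: $\mu_a=\max_{k\ne\ell}|\mathbf{a}_k^H\mathbf{a}_\ell|$, $\mu_b=\max_{k\ne\ell}|\mathbf{b}_k^H\mathbf{b}_\ell|$, $\mu_m=\max_{k,\ell}|\mathbf{a}_k^H\mathbf{b}_\ell|$. *)

(* The complex field C is generalised to an arbitrary
   numClosedFieldType (algC is an instance); norms are real (nonneg) elements. *)
From HB Require Import structures.
From mathcomp Require Import all_boot all_order all_algebra.
Set Implicit Arguments. Unset Strict Implicit. Unset Printing Implicit Defensive.
Import Order.TTheory GRing.Theory Num.Theory.
Local Open Scope ring_scope.

Definition colinner (C : numClosedFieldType) (M na nb : nat)
  (A : 'M[C]_(M, na)) (B : 'M[C]_(M, nb)) (k : 'I_na) (l : 'I_nb) : C :=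
  \sum_(i < M) (A i k)^* * B i l.

Definition sqnorm (C : numClosedFieldType) (n : nat) (v : 'cV[C]_n) : C :=
  \sum_(i < n) `|v i 0| ^+ 2.

Definition unit_cols (C : numClosedFieldType) (M n : nat) (A : 'M[C]_(M, n)) : Prop :=
  forall k : 'I_n, sqnorm (col k A) = 1.

(* mu_a = max_{k <> l} |a_k^H a_l| (0 if there is no such pair) *)
Definition coh_self (C : numClosedFieldType) (M n : nat) (A : 'M[C]_(M, n)) : C :=
  \big[Num.max/0]_(k < n) \big[Num.max/0]_(l < n | l != k) `|colinner A A k l|.

Definition coh_mut (C : numClosedFieldType) (M na nb : nat)
  (A : 'M[C]_(M, na)) (B : 'M[C]_(M, nb)) : C :=
  \big[Num.max/0]_(k < na) \big[Num.max/0]_(l < nb) `|colinner A B k l|.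

Definition nnz (C : numClosedFieldType) (n : nat) (v : 'cV[C]_n) : nat :=
  #|[set i : 'I_n | v i 0 != 0]|.

From HB Require Import structures.
From mathcomp Require Import all_boot all_order all_algebra.
From mathcomp Require Import ring.
Import Order.TTheory GRing.Theory Num.Theory.
Set Implicit Arguments. Unset Strict Implicit.
Local Open Scope ring_scope.

(* Write h = [u; v] with u supported on at most nx and v on at most ne
   coordinates.  Expanding the Gram matrix of D,
     |Dh|^2 = <Au,Au> + <Bv,Bv> + 2 Re <Au,Bv>,
   and each piece is controlled by a coherence parameter:
   - <Au,Au> - |u|^2 only involves off-diagonal inner products, so its size
     is at most mu_a (|u|_1^2 - |u|^2) <= mu_a (nx - 1) |u|^2, using the
     sparse Cauchy-Schwarz inequality |u|_1^2 <= nnz(u) |u|^2;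
   - |<Au,Bv>| <= mu_m |u|_1 |v|_1, and 2 |u|_1 |v|_1 <= sqrt(nx ne) |h|^2
     by the arithmetic-geometric mean inequality. *)

Section Bigmax.
Variable C : numClosedFieldType.

(* Maxima of nonnegative families taken from 0; the order on C is partial,
   so comparability comes from nonnegativity. *)
Lemma bigmax_ge0 (I : Type) (r : seq I) (P : pred I) (F : I -> C) :
  (forall i, P i -> 0 <= F i) -> 0 <= \big[Num.max/0]_(i <- r | P i) F i.
Proof.
move=> F0; apply: (big_ind (fun x => 0 <= x)) => // x y x0 y0.
by rewrite comparable_le_max ?x0 // real_comparable ?ger0_real.
Qed.

Lemma le_bigmax_seq (I : eqType) (r : seq I) (P : pred I) (F : I -> C) j :
  (forall i, P i -> 0 <= F i) -> P j -> j \in r ->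
  F j <= \big[Num.max/0]_(i <- r | P i) F i.
Proof.
move=> F0 Pj; elim: r => [//|a r IH]; rewrite inE big_cons.
have cmp x : 0 <= x -> x >=< \big[Num.max/0]_(i <- r | P i) F i.
  by move=> x0; rewrite real_comparable ?ger0_real ?bigmax_ge0.
case/orP => [/eqP <-|jr]; first by rewrite Pj comparable_le_max ?lexx ?cmp ?F0.
case: ifP => [Pa|_]; last exact: IH.
by rewrite comparable_le_max ?IH ?orbT ?cmp ?F0.
Qed.

Lemma le_bigmax (I : finType) (P : pred I) (F : I -> C) j :
  (forall i, P i -> 0 <= F i) -> P j -> F j <= \big[Num.max/0]_(i | P i) F i.
Proof. by move=> F0 Pj; apply: le_bigmax_seq; rewrite ?mem_index_enum. Qed.

End Bigmax.

Section Coherence.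
Variables (C : numClosedFieldType) (M na nb : nat).
Variables (A : 'M[C]_(M, na)) (B : 'M[C]_(M, nb)).

Lemma coh_self_ge0 : 0 <= coh_self A.
Proof. by apply: bigmax_ge0 => k _; apply: bigmax_ge0. Qed.

Lemma coh_self_le k l : l != k -> `|colinner A A k l| <= coh_self A.
Proof.
move=> lk; rewrite /coh_self.
apply: le_trans (le_bigmax (P := predT) _ (isT : predT k)).
  exact: (le_bigmax (P := fun l => l != k)).
by move=> i _; apply: bigmax_ge0.
Qed.

Lemma coh_mut_ge0 : 0 <= coh_mut A B.
Proof. by apply: bigmax_ge0 => k _; apply: bigmax_ge0. Qed.

Lemma coh_mut_le k l : `|colinner A B k l| <= coh_mut A B.
Proof.
rewrite /coh_mut; apply: le_trans (le_bigmax (P := predT) _ (isT : predT k)).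
  exact: (le_bigmax (P := predT)).
by move=> i _; apply: bigmax_ge0.
Qed.

End Coherence.

Section GramExpansion.
Variable C : numClosedFieldType.

Definition colform (M na nb : nat) (A : 'M[C]_(M, na)) (B : 'M[C]_(M, nb))
    (u : 'cV[C]_na) (v : 'cV[C]_nb) : C :=
  \sum_(k < na) \sum_(l < nb) (u k 0)^* * v l 0 * colinner A B k l.

Lemma sqnormE n (w : 'cV[C]_n) : sqnorm w = \sum_(i < n) (w i 0)^* * w i 0.
Proof. by apply: eq_bigr => i _; rewrite normCK mulrC. Qed.

Lemma sqnorm_ge0 n (w : 'cV[C]_n) : 0 <= sqnorm w.
Proof. by apply: sumr_ge0 => i _; rewrite exprn_ge0. Qed.

Lemma sqnorm_col_mx n m (u : 'cV[C]_n) (v : 'cV[C]_m) :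
  sqnorm (col_mx u v) = sqnorm u + sqnorm v.
Proof. by rewrite /sqnorm big_split_ord /=; under eq_bigr do rewrite col_mxEu;
  under [X in _ + X]eq_bigr do rewrite col_mxEd.
Qed.

Lemma cdot_mulmx M na nb (A : 'M[C]_(M, na)) (B : 'M[C]_(M, nb))
    (u : 'cV[C]_na) (v : 'cV[C]_nb) :
  \sum_(i < M) ((A *m u) i 0)^* * (B *m v) i 0 = colform A B u v.
Proof.
under eq_bigr => i _ do rewrite !mxE rmorph_sum big_distrlr /=.
rewrite exchange_big /=; apply: eq_bigr => k _.
rewrite exchange_big /=; apply: eq_bigr => l _.
rewrite /colinner mulr_sumr; apply: eq_bigr => i _; rewrite rmorphM /=; ring.
Qed.

Lemma sqnorm_row_col M na nb (A : 'M[C]_(M, na)) (B : 'M[C]_(M, nb))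
    (u : 'cV[C]_na) (v : 'cV[C]_nb) :
  sqnorm (row_mx A B *m col_mx u v) =
  colform A A u u + colform B B v v + (colform A B u v + (colform A B u v)^*).
Proof.
rewrite sqnormE mul_row_col -!cdot_mulmx rmorph_sum -!big_split /=.
apply: eq_bigr => i _; rewrite mxE rmorphD rmorphM /= conjCK; ring.
Qed.

End GramExpansion.

Section SparseEstimates.
Variable C : numClosedFieldType.

Definition absum n (u : 'cV[C]_n) : C := \sum_(k < n) `|u k 0|.

Lemma absum_ge0 n (u : 'cV[C]_n) : 0 <= absum u.
Proof. exact: sumr_ge0. Qed.

Lemma sqr_sum_le_card (I : finType) (S : {pred I}) (x : I -> C) :
  (forall i, x i \is Num.real) ->
  (\sum_(i in S) x i) ^+ 2 <= #|S|%:R * \sum_(i in S) x i ^+ 2.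
Proof.
move=> xR; rewrite -(ler_pM2l (ltr0n C 2)) expr2 big_distrlr /=.
have <- : \sum_(k in S) \sum_(l in S) (x k ^+ 2 + x l ^+ 2)
    = 2%:R * (#|S|%:R * \sum_(i in S) x i ^+ 2).
  under eq_bigr do rewrite big_split /= sumr_const.
  by rewrite big_split /= sumr_const sumrMnl !mulr_natl mulr2n.
rewrite mulr_sumr; apply: ler_sum => k _; rewrite mulr_sumr.
apply: ler_sum => l _; rewrite mulr_natl.
exact: real_leif_mean_square_scaled.
Qed.

Lemma absum_sparse n (u : 'cV[C]_n) : absum u ^+ 2 <= (nnz u)%:R * sqnorm u.
Proof.
pose S := [set i | u i 0 != 0].
have supp (F : C -> C) : F 0 = 0 ->
    \sum_(k < n) F `|u k 0| = \sum_(k in S) F `|u k 0|.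
  move=> F0; rewrite (bigID (mem S)) /= [X in _ + X]big1 ?addr0 //.
  by move=> k; rewrite inE negbK => /eqP ->; rewrite normr0.
rewrite /absum /sqnorm (supp id) // (supp (fun x => x ^+ 2)) ?expr0n //.
by apply: sqr_sum_le_card => k; apply: normr_real.
Qed.

Lemma absum_le_sparsity n m (u : 'cV[C]_n) :
  (nnz u <= m)%N -> absum u ^+ 2 <= m%:R * sqnorm u.
Proof.
move=> um; apply: le_trans (absum_sparse u) _.
by rewrite ler_wpM2r ?sqnorm_ge0 ?ler_nat.
Qed.

Lemma colform_self_dev M n m (A : 'M[C]_(M, n)) (u : 'cV[C]_n) :
  unit_cols A -> (nnz u <= m)%N ->
  `|colform A A u u - sqnorm u| <= coh_self A * (m%:R - 1) * sqnorm u.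
Proof.
move=> unitA um.
have diag k : colinner A A k k = 1.
  by rewrite -(unitA k) sqnormE; apply: eq_bigr => i _; rewrite !mxE.
have offdiag : colform A A u u - sqnorm u
    = \sum_(k < n) \sum_(l < n | l != k) (u k 0)^* * u l 0 * colinner A A k l.
  rewrite sqnormE -sumrB; apply: eq_bigr => k _.
  by rewrite (bigD1 k) //= diag mulr1 addrC addrK.
have absum_offdiag : absum u ^+ 2 - sqnorm u
    = \sum_(k < n) \sum_(l < n | l != k) `|u k 0| * `|u l 0|.
  rewrite /absum expr2 big_distrlr /= /sqnorm -sumrB; apply: eq_bigr => k _.
  by rewrite (bigD1 k) //= -expr2 addrC addrK.
rewrite offdiag; apply: le_trans (ler_norm_sum _ _ _) _.
apply: (@le_trans _ _ (coh_self A * (absum u ^+ 2 - sqnorm u))).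
  rewrite absum_offdiag mulr_sumr; apply: ler_sum => k _.
  apply: le_trans (ler_norm_sum _ _ _) _; rewrite mulr_sumr.
  apply: ler_sum => l lk; rewrite !normrM norm_conjC [X in _ <= X]mulrC.
  by rewrite ler_wpM2l ?mulr_ge0 ?coh_self_le.
rewrite -mulrA ler_wpM2l ?coh_self_ge0 // mulrBl mul1r lerD2r.
exact: absum_le_sparsity.
Qed.

Lemma colform_cross_le M na nb (A : 'M[C]_(M, na)) (B : 'M[C]_(M, nb))
    (u : 'cV[C]_na) (v : 'cV[C]_nb) :
  `|colform A B u v| <= coh_mut A B * (absum u * absum v).
Proof.
apply: le_trans (ler_norm_sum _ _ _) _.
rewrite /absum big_distrlr mulr_sumr; apply: ler_sum => k _.
apply: le_trans (ler_norm_sum _ _ _) _; rewrite mulr_sumr; apply: ler_sum => l _.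
rewrite !normrM norm_conjC [X in _ <= X]mulrC.
by rewrite ler_wpM2l ?mulr_ge0 ?coh_mut_le.
Qed.

End SparseEstimates.

Section RealArithmetic.
Variable C : numClosedFieldType.

Lemma amgm_sqrt (n m : nat) (P Q U V : C) :
  (0 < n)%N -> (0 < m)%N -> 0 <= P -> 0 <= Q -> 0 <= U -> 0 <= V ->
  P ^+ 2 <= n%:R * U -> Q ^+ 2 <= m%:R * V ->
  2%:R * (P * Q) <= sqrtC ((n * m)%:R) * (U + V).
Proof.
move=> n0 m0 P0 Q0 U0 V0 PU QV.
rewrite natrM sqrtCM ?nnegrE ?ler0n //.
set a := sqrtC n%:R; set b := sqrtC m%:R.
have a0 : 0 < a by rewrite sqrtC_gt0 ltr0n.
have b0 : 0 < b by rewrite sqrtC_gt0 ltr0n.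
rewrite -(ler_pM2l (mulr_gt0 a0 b0)).
have -> : a * b * (2%:R * (P * Q)) = (b * P) * (a * Q) *+ 2 by ring.
apply: le_trans (real_leif_mean_square_scaled _ _) _;
  try by rewrite ger0_real // mulr_ge0 // ltW.
have -> : a * b * (a * b * (U + V)) = b ^+ 2 * (a ^+ 2 * U) + a ^+ 2 * (b ^+ 2 * V)
  by ring.
rewrite !exprMn !sqrtCK.
by apply: lerD; rewrite ler_wpM2l ?ler0n.
Qed.

Lemma collect_bound (ma mb mm s P Q U V : C) :
  0 <= ma -> 0 <= mb -> 0 <= mm -> 0 <= U -> 0 <= V ->
  2%:R * (P * Q) <= s * (U + V) ->
  ma * U + mb * V + 2%:R * (mm * (P * Q)) <= (Num.max ma mb + s * mm) * (U + V).
Proof.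
move=> ma0 mb0 mm0 U0 V0 PQ.
have cmp : ma >=< mb by rewrite real_comparable ?ger0_real.
have -> : (Num.max ma mb + s * mm) * (U + V)
    = Num.max ma mb * U + Num.max ma mb * V + mm * (s * (U + V)) by ring.
apply: lerD; first apply: lerD.
- by rewrite ler_wpM2r // comparable_le_max ?lexx.
- by rewrite ler_wpM2r // comparable_le_max ?lexx ?orbT.
by rewrite mulrCA ler_wpM2l.
Qed.

Lemma two_sided_of_dev (x y g : C) :
  x \is Num.real -> y \is Num.real -> `|x - y| <= g * y ->
  (1 - g) * y <= x /\ x <= (1 + g) * y.
Proof.
move=> xR yR /(real_ler_normlP (rpredB xR yR)) [lo hi].
split; rewrite -subr_ge0.
  by rewrite (_ : x - (1 - g) * y = g * y - - (x - y)) ?subr_ge0 //; ring.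
by rewrite (_ : (1 + g) * y - x = g * y - (x - y)) ?subr_ge0 //; ring.
Qed.

End RealArithmetic.

Lemma rip_deviation (C : numClosedFieldType) (M Na Nb nx ne : nat)
    (A : 'M[C]_(M, Na)) (B : 'M[C]_(M, Nb)) (u : 'cV[C]_Na) (v : 'cV[C]_Nb) :
  unit_cols A -> unit_cols B -> (1 <= nx)%N -> (1 <= ne)%N ->
  (nnz u <= nx)%N -> (nnz v <= ne)%N ->
  `|sqnorm (row_mx A B *m col_mx u v) - sqnorm (col_mx u v)| <=
  (Num.max (coh_self A * (nx%:R - 1)) (coh_self B * (ne%:R - 1))
   + sqrtC ((nx * ne)%:R) * coh_mut A B) * sqnorm (col_mx u v).
Proof.
move=> unitA unitB nx0 ne0 ux ve.
set X := colform A B u v.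
have -> : sqnorm (row_mx A B *m col_mx u v) - sqnorm (col_mx u v)
    = (colform A A u u - sqnorm u) + (colform B B v v - sqnorm v) + (X + X^*).
  by rewrite sqnorm_row_col sqnorm_col_mx -/X; ring.
have cross : `|X + X^*| <= 2%:R * (coh_mut A B * (absum u * absum v)).
  apply: le_trans (ler_normD _ _) _; rewrite norm_conjC -mulr2n mulr_natl.
  exact/ler_wMn2r/colform_cross_le.
have diag : `|(colform A A u u - sqnorm u) + (colform B B v v - sqnorm v)|
    <= coh_self A * (nx%:R - 1) * sqnorm u + coh_self B * (ne%:R - 1) * sqnorm v.
  apply: le_trans (ler_normD _ _) _.
  exact: lerD (colform_self_dev unitA ux) (colform_self_dev unitB ve).
rewrite sqnorm_col_mx; apply: le_trans (ler_normD _ _) _.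
apply: le_trans (lerD diag cross) _.
apply: collect_bound; rewrite ?mulr_ge0 ?coh_self_ge0 ?coh_mut_ge0 ?sqnorm_ge0
  ?subr_ge0 ?ler1n //.
by apply: amgm_sqrt; rewrite ?absum_ge0 ?sqnorm_ge0 ?absum_le_sparsity.
Qed.

Theorem mainTheorem7 (C : numClosedFieldType) (M Na Nb nx ne : nat)
  (A : 'M[C]_(M, Na)) (B : 'M[C]_(M, Nb))
  (hx : 'cV[C]_Na) (he : 'cV[C]_Nb) :
  unit_cols A -> unit_cols B ->
  (1 <= nx)%N -> (1 <= ne)%N ->
  (nnz hx <= nx)%N -> (nnz he <= ne)%N ->
  let g := Num.max (coh_self A * (nx%:R - 1)) (coh_self B * (ne%:R - 1))
           + sqrtC ((nx * ne)%:R) * coh_mut A B in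
  let h := col_mx hx he in
  let D := row_mx A B in
  (1 - g) * sqnorm h <= sqnorm (D *m h) /\ sqnorm (D *m h) <= (1 + g) * sqnorm h.
Proof.
move=> unitA unitB nx0 ne0 hxs hes g h D.
apply: two_sided_of_dev; rewrite ?ger0_real ?sqnorm_ge0 //.
exact: rip_deviation.
Qed.
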